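(* Let $T$ be a minimal tree with $n$ vertices. (i) Every vertex of $T$ other than the root is either a leaf or has at least two children (i.e., no non-root vertex has degree $2$). (ii) If $n\ge 8$, then the root of $T$ has exactly two children.
   Context: A rooted tree $T$ is a finite tree with a distinguished vertex, its root; its order $|T|$ is its number of vertices. For vertices $u,v$, the infimum of $u$ and $v$ is the vertex common to the path from $u$ to the root and the path from $v$ to the root that is furthest from the root. A set $X\subseteq V(T)$ is infima closed if the infimum of any two elements of $X$ lies in $X$. $I(T)$ denotes the number of nonempty infima closed subsets of $V(T)$. For $n\ge1$, $m_n=\min\{I(T): T \text{ a rooted tree with } n \text{ vertices}\}$; a rooted tree $T$ with $I(T)=m_{|T|}$ is called minimal. *)

From mathcomp Require Import all_boot.
From mathcomp Require Import boolp.

Set Implicit Arguments.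
Unset Strict Implicit.
Unset Printing Implicit Defensive.

(* A rooted tree on a finite vertex type V, given by its troot and its parent
   map: the troot is its own parent and every vertex reaches the troot by
   iterating the parent map (this forces acyclicity). The order of the tree
   is #|V|. *)
Record rtree (V : finType) := RTree {
  troot : V;
  tpar : V -> V;
  par_root : tpar troot = troot;
  par_reach : forall v : V, exists k, iter k tpar v = troot
}.

Definition anc (V : finType) (T : rtree V) (a v : V) : Prop :=
  exists k, iter k (tpar T) v = a.

Definition is_inf (V : finType) (T : rtree V) (u v w : V) : Prop :=
  [/\ anc T w u, anc T w v & forall c, anc T c u -> anc T c v -> anc T c w].

Definition inf_closed (V : finType) (T : rtree V) (X : {set V}) : Prop :=
  forall u v w, u \in X -> v \in X -> is_inf T u v w -> w \in X.

Definition Icount (V : finType) (T : rtree V) : nat :=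
  #|[set X : {set V} | (X != set0) && `[< inf_closed T X >] ]|.

Definition minimal (V : finType) (T : rtree V) : Prop :=
  forall (W : finType) (T' : rtree W), #|W| = #|V| -> Icount T <= Icount T'.

Definition children (V : finType) (T : rtree V) (v : V) : {set V} :=
  [set c | (c != troot T) && (tpar T c == v)].

From mathcomp Require Import all_boot boolp zify.
Set Implicit Arguments.
Unset Strict Implicit.
Unset Printing Implicit Defensive.

(* For a vertex u let I(u) count the nonempty infima closed sets of vertices
   of the subtree T_u.  Splitting such a set according to whether it contains
   u gives the recursion (Isub_rec)
       I(u) = \sum_c I(c) + \prod_c (I(c) + 1)      (c ranging over children),
   and I(T) = I(root).  The recursion only reads the children relation inside
   T_u (Isub_local), so after moving a few vertices to new parents
   ("regrafting") I is unchanged on every subtree untouched by the move, and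
   since the recursion is strictly increasing in each I(c), a decrease of I
   at one vertex propagates to the root (lift_lt_anc).

   A tree is improvable if some tree on the same vertices has a smaller I;
   minimal trees are not.  Each claim is proved by an explicit regrafting
   that lowers I: (i) a non-root vertex with a single child x gives x to its
   parent; (ii) for n >= 8 a root with one child lifts a grandchild, and a
   root with at least three children admits one of four rearrangements
   (graft, gather, swap, split) depending on which children are leaves. *)

Section Ancestry.
Variables (V : finType) (T : rtree V).
Local Notation r := (troot T).
Local Notation p := (tpar T).

Lemma iter_par_root k : iter k p r = r.
Proof. by elim: k => // k IH; rewrite iterS IH par_root. Qed.

Lemma anc_refl a : anc T a a.
Proof. by exists 0. Qed.

Lemma anc_trans a b c : anc T a b -> anc T b c -> anc T a c.
Proof. by case=> k Hk [l Hl]; exists (k + l); rewrite iterD Hl. Qed.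

Lemma anc_par x : anc T (p x) x.
Proof. by exists 1. Qed.

Lemma anc_root x : anc T r x.
Proof. exact: par_reach. Qed.

Lemma par_fixed_root x : p x = x -> x = r.
Proof.
move=> Hx; have [k Hk] := par_reach T x.
suff: iter k p x = x by rewrite Hk.
by elim: k {Hk} => // k IH; rewrite iterS IH Hx.
Qed.

(* The ancestor relation is a partial order: a cycle of the parent map
   through b would keep b away from the root forever. *)
Lemma anc_antisym a b : anc T a b -> anc T b a -> a = b.
Proof.
case=> k Hk [l Hl]; case: (posnP (k + l)) => [|Hpos].
  by move/eqP; rewrite addn_eq0 => /andP[/eqP Hk0 _]; rewrite -Hk Hk0.
have Hcycle : iter (k + l) p b = b by rewrite addnC iterD Hk Hl.
have Hloop j : iter (j * (k + l)) p b = b.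
  by elim: j => // j IH; rewrite mulSn iterD IH Hcycle.
have [m Hm] := par_reach T b.
have := Hloop m; rewrite -(subnK (leq_pmulr m Hpos)) iterD Hm iter_par_root.
by move=> Hbr; rewrite -Hk -Hbr iter_par_root.
Qed.

Lemma anc_chain a b x : anc T a x -> anc T b x -> anc T a b \/ anc T b a.
Proof.
case=> k Hk [l Hl]; case: (leqP k l) => H.
  by right; exists (l - k); rewrite -Hk -iterD subnK.
by left; exists (k - l); rewrite -Hl -iterD subnK // ltnW.
Qed.

Lemma anc_step a x : anc T a x -> a = x \/ anc T a (p x).
Proof. by case=> [[|k]] Hk; [left|right; exists k; rewrite -iterSr]. Qed.

Lemma not_anc_root x : x != r -> ~ anc T x r.
Proof. by move=> /eqP Hx H; apply: Hx; apply: anc_antisym H (anc_root _). Qed.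

Definition subtree u : {set V} := [set z | `[< anc T u z >]].

Lemma subtreeP u z : reflect (anc T u z) (z \in subtree u).
Proof. rewrite inE; exact: asboolP. Qed.

Lemma subtree_self u : u \in subtree u.
Proof. exact/subtreeP/anc_refl. Qed.

Lemma subtree_root : subtree r = setT.
Proof. by apply/setP=> z; rewrite inE in_setT; apply/asboolP/anc_root. Qed.

Lemma childP u c : reflect (c != r /\ p c = u) (c \in children T u).
Proof. rewrite inE; apply: (iffP andP) => -[? H]; split=> //; exact/eqP. Qed.

Lemma child_neq_root u c : c \in children T u -> c != r.
Proof. by case/childP. Qed.

Lemma child_par u c : c \in children T u -> p c = u.
Proof. by case/childP. Qed.

Lemma child_anc u c : c \in children T u -> anc T u c.
Proof. by move/child_par <-; apply: anc_par. Qed.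

Lemma child_neq u c : c \in children T u -> c <> u.
Proof. by case/childP => /eqP Hc Hp Hcu; apply: Hc; apply: par_fixed_root; rewrite Hp. Qed.

Lemma child_not_anc u c : c \in children T u -> ~ anc T c u.
Proof. by move=> H Hcu; apply: (child_neq H); apply: anc_antisym Hcu (child_anc H). Qed.

Lemma children_disj u c1 c2 z : c1 \in children T u -> c2 \in children T u ->
  anc T c1 z -> anc T c2 z -> c1 = c2.
Proof.
move=> H1 H2 A1 A2.
have Hgen a b : a \in children T u -> b \in children T u -> anc T a b -> a = b.
  move=> Ha Hb Hab; case: (anc_step Hab) => // Hau.
  by rewrite (child_par Hb) in Hau; case: (child_not_anc Ha Hau).
by case: (anc_chain A1 A2) => H; [apply: Hgen | symmetry; apply: Hgen].
Qed.

Lemma sibling_not_anc u c1 c2 : c1 \in children T u -> c2 \in children T u ->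
  c1 != c2 -> ~ anc T c1 c2.
Proof. by move=> H1 H2 /eqP Hne H; apply: Hne; apply: children_disj H1 H2 H (anc_refl _). Qed.

Lemma descend_child u z : anc T u z -> z <> u ->
  exists2 c, c \in children T u & anc T c z.
Proof.
case=> k; elim: k z => [|k IH] z /= Hk Hzu; first by case: Hzu.
case: (eqVneq (iter k p z) r) => Hr.
  by apply: IH => //; rewrite -Hk Hr par_root.
by exists (iter k p z); [apply/childP | exists k].
Qed.

Lemma subtree_child u c : c \in children T u -> subtree c \subset subtree u.
Proof.
move=> H; apply/subsetP => z /subtreeP Hz; apply/subtreeP.
exact: anc_trans (child_anc H) Hz.
Qed.

Lemma notin_subtree_child u c : c \in children T u -> u \notin subtree c.
Proof. by move=> Hc; apply/subtreeP; apply: child_not_anc. Qed.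

Lemma anc_notin_subtree_child u c z : c \in children T u -> anc T z u ->
  z \notin subtree c.
Proof.
move=> Hc Hzu; apply/subtreeP => Hcz; apply: (child_not_anc Hc); exact: anc_trans Hcz Hzu.
Qed.

Lemma sibling_notin_subtree u c1 c2 : c1 \in children T u -> c2 \in children T u ->
  c1 != c2 -> c2 \notin subtree c1.
Proof. by move=> H1 H2 Hne; apply/subtreeP; apply: sibling_not_anc H1 H2 Hne. Qed.

Lemma subtree_disj u c1 c2 z : c1 \in children T u -> c2 \in children T u ->
  z \in subtree c1 -> z \in subtree c2 -> c1 = c2.
Proof. by move=> H1 H2 /subtreeP A1 /subtreeP A2; apply: children_disj H1 H2 A1 A2. Qed.

Lemma tree_ind (P : V -> Prop) :
  (forall u, (forall c, c \in children T u -> P c) -> P u) -> forall u, P u.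
Proof.
move=> IH u; have lt_child v c : c \in children T v -> #|subtree c| < #|subtree v|.
  move=> Hc; apply: proper_card; apply/properP; split; first exact: subtree_child.
  by exists v; [apply: subtree_self | apply: notin_subtree_child].
have : #|subtree u| <= #|subtree u| by [].
move: {2}#|subtree u| => n.
elim: n u => [|n IHn] u Hn; apply: IH => c Hc.
  by have := lt_child _ _ Hc; rewrite ltnNge (leq_trans Hn).
by apply: IHn; rewrite -ltnS (leq_trans (lt_child _ _ Hc)).
Qed.

Lemma subtree_decomp u : subtree u = u |: \bigcup_(c in children T u) subtree c.
Proof.
apply/setP => z; rewrite in_setU1; apply/idP/idP.
  move/subtreeP => Hz; case: (eqVneq z u) => [//|Hne].
  have [c Hc Hcz] := descend_child Hz (elimN eqP Hne).
  by apply/orP; right; apply/bigcupP; exists c => //; apply/subtreeP.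
case/orP => [/eqP ->|/bigcupP [c Hc Hz]]; first exact: subtree_self.
by move/subsetP: (subtree_child Hc); apply.
Qed.

End Ancestry.

Lemma card_bigcup_disj (I U : finType) (A : {set I}) (F : I -> {set U}) :
  (forall i j, i \in A -> j \in A -> i != j -> [disjoint F i & F j]) ->
  #|\bigcup_(i in A) F i| = \sum_(i in A) #|F i|.
Proof.
move: {2}#|A| (erefl #|A|) => n; elim: n A => [|n IH] A HA Hd.
  by move/eqP: HA; rewrite cards_eq0 => /eqP ->; rewrite !big_set0 cards0.
have : 0 < #|A| by rewrite HA.
rewrite card_gt0 => /set0Pn [a Ha].
rewrite (big_setD1 a Ha) [in RHS](big_setD1 a Ha) /=.
rewrite cardsU disjoint_setI0 ?cards0 ?subn0.
  rewrite IH //; first by move: HA; rewrite (cardsD1 a) Ha => -[].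
  by move=> i j /setD1P [_ Hi] /setD1P [_ Hj]; apply: Hd.
apply: bigcup_disjoint => i /setD1P [Hia Hi]; apply: Hd => //.
by rewrite eq_sym.
Qed.

Lemma card_setD1 (T : finType) (A : {set T}) a : a \in A -> #|A :\ a| = #|A|.-1.
Proof. by move=> Ha; rewrite (cardsD1 a A) Ha. Qed.

Section InfClosed.
Variables (V : finType) (T : rtree V).

Lemma is_inf_sym a b w : is_inf T a b w -> is_inf T b a w.
Proof. by case=> H1 H2 H3; split=> // c Hb Ha; apply: H3. Qed.

Lemma is_inf_uniq a b w1 w2 : is_inf T a b w1 -> is_inf T a b w2 -> w1 = w2.
Proof. by case=> A1 B1 C1 [A2 B2 C2]; apply: anc_antisym; [apply: C2 | apply: C1]. Qed.

Lemma is_inf_anc u b : anc T u b -> is_inf T u b u.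
Proof. by move=> H; split=> //; apply: anc_refl. Qed.

Lemma is_inf_siblings u c1 c2 a b : c1 \in children T u -> c2 \in children T u ->
  c1 <> c2 -> anc T c1 a -> anc T c2 b -> is_inf T a b u.
Proof.
move=> H1 H2 Hne Ha Hb; split.
- exact: anc_trans (child_anc H1) Ha.
- exact: anc_trans (child_anc H2) Hb.
move=> d Hda Hdb; case: (anc_chain Hda Ha) => Hd.
  case: (anc_step Hd) => [Edc|]; last by rewrite (child_par H1).
  by subst d; case: Hne; apply: children_disj H1 H2 Hdb Hb.
by case: Hne; apply: children_disj H1 H2 (anc_trans Hd Hdb) Hb.
Qed.

Definition icl (X : {set V}) : bool := `[< inf_closed T X >].

Lemma iclP X : reflect (inf_closed T X) (icl X).
Proof. exact: asboolP. Qed.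

Lemma icl_set0 : icl set0.
Proof. by apply/iclP => a b w; rewrite inE. Qed.

Lemma icl_set1 u : icl [set u].
Proof.
apply/iclP => a b w; rewrite !inE => /eqP -> /eqP -> H.
by rewrite (is_inf_uniq H (is_inf_anc (anc_refl _ u))).
Qed.

Lemma icl_setI_subtree X c : icl X -> icl (X :&: subtree T c).
Proof.
move/iclP => H; apply/iclP => a b w; rewrite !inE => /andP [Ha Sa] /andP [Hb Sb] Hi.
rewrite (H a b w) //=; apply/asboolP; case: Hi => _ _; apply; exact/asboolP.
Qed.

Lemma icl_setD_subtree X c : icl X -> icl (X :\: subtree T c).
Proof.
move/iclP => H; apply/iclP => a b w; rewrite !inE => /andP [Sa Ha] /andP [Sb Hb] Hi.
rewrite (H a b w) // andbT; apply/negP => /asboolP Hcw.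
by move/negP: Sa; apply; apply/asboolP; case: Hi => Hwa _ _; apply: anc_trans Hcw Hwa.
Qed.

Definition icl_sets u : {set {set V}} :=
  [set X : {set V} | [&& X != set0, X \subset subtree T u & icl X]].
Definition Isub u : nat := #|icl_sets u|.

Lemma Icount_root : Icount T = Isub (troot T).
Proof. by apply: eq_card => X; rewrite !inE subtree_root subsetT. Qed.

Section AtVertex.
Variable u : V.

(* A set avoiding u lies in the subtree of a single child: two children
   would contribute two vertices with infimum u. *)
Lemma icl_sets_notin X : X \in icl_sets u -> u \notin X ->
  exists2 c, c \in children T u & X \in icl_sets c.
Proof.
rewrite inE => /and3P [/set0Pn [a Ha] Hsub Hicl] Hu.
have in_child z : z \in X -> exists2 c, c \in children T u & z \in subtree T c.
  move=> Hz; have /subtreeP Az := subsetP Hsub z Hz.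
  have Hne : z <> u by move=> E; rewrite -E Hz in Hu.
  by have [c Hc Hcz] := descend_child Az Hne; exists c => //; apply/subtreeP.
have [c Hc Hac] := in_child a Ha.
exists c => //; rewrite inE Hicl andbT; apply/andP; split; first by apply/set0Pn; exists a.
apply/subsetP => b Hb; have [c' Hc' Hbc'] := in_child b Hb.
case: (eqVneq c c') => [-> //|Hne].
have Hinf := is_inf_siblings Hc Hc' (elimN eqP Hne) (elimT (subtreeP _ _ _) Hac)
  (elimT (subtreeP _ _ _) Hbc').
by move/iclP: Hicl => /(_ a b u Ha Hb Hinf) Hu'; rewrite Hu' in Hu.
Qed.

Definition icl_sets0 c : {set {set V}} :=
  [set Y : {set V} | (Y \subset subtree T c) && icl Y].

Lemma card_icl_sets0 c : #|icl_sets0 c| = (Isub c).+1.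
Proof.
have -> : icl_sets0 c = set0 |: icl_sets c.
  apply/setP => Y; rewrite !inE; case: (eqVneq Y set0) => [->|] //=.
  by rewrite sub0set icl_set0.
by rewrite cardsU1 inE eqxx.
Qed.

Definition icl_top (A : {set V}) : {set {set V}} :=
  [set X : {set V} | [&& u \in X,
     X \subset u |: \bigcup_(c in A) subtree T c & icl X]].

Lemma icl_top_disj (A : {set V}) a X : A \subset children T u ->
  a \in children T u -> a \notin A -> X \in icl_top A -> [disjoint X & subtree T a].
Proof.
move=> HA Ha HaA; rewrite inE => /and3P [_ HX _].
rewrite disjoint_subset; apply/subsetP => z Hz; rewrite inE.
move: (subsetP HX z Hz); rewrite in_setU1 => /orP [/eqP ->|/bigcupP [c Hc Hzc]].
  exact: notin_subtree_child.
apply/negP => Hza; have E := subtree_disj (subsetP HA c Hc) Ha Hzc Hza.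
by move: HaA; rewrite -E Hc.
Qed.

(* Adding the part in a further child subtree keeps infima closedness, since
   all the new infima equal u. *)
Lemma icl_top_setU (A : {set V}) a X Y : A \subset children T u ->
  a \in children T u -> a \notin A -> X \in icl_top A -> Y \in icl_sets0 a ->
  icl (X :|: Y).
Proof.
move=> HA Ha HaA; rewrite !inE => /and3P [HuX HXs HXi] /andP [HYs HYi].
have cross z y : z \in X -> y \in Y -> is_inf T z y u.
  move=> Hz Hy; have /subtreeP Ay := subsetP HYs y Hy.
  move: (subsetP HXs z Hz); rewrite in_setU1 => /orP [/eqP ->|/bigcupP [c Hc Hzc]].
    by apply: is_inf_anc; apply: anc_trans (child_anc Ha) Ay.
  apply: (is_inf_siblings (subsetP HA c Hc) Ha) => //; last exact/subtreeP.
  by move=> E; move: HaA; rewrite -E Hc.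
apply/iclP => b1 b2 w; rewrite !inE => /orP [H1|H1] /orP [H2|H2] Hi.
- by move/iclP: HXi => /(_ b1 b2 w H1 H2 Hi) ->.
- by rewrite (is_inf_uniq Hi (cross _ _ H1 H2)) HuX.
- by rewrite (is_inf_uniq (is_inf_sym Hi) (cross _ _ H2 H1)) HuX.
- by move/iclP: HYi => /(_ b1 b2 w H1 H2 Hi) ->; rewrite orbT.
Qed.

Lemma icl_top_split (A : {set V}) a : A \subset children T u ->
  a \in children T u -> a \notin A ->
  icl_top (a |: A) = [set pr.1 :|: pr.2 | pr in setX (icl_top A) (icl_sets0 a)].
Proof.
move=> HA Ha HaA; apply/setP => X; apply/idP/imsetP.
  rewrite inE => /and3P [HuX HXs HXi].
  exists (X :\: subtree T a, X :&: subtree T a); last by rewrite /= setUC setID.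
  have Hna := notin_subtree_child Ha; rewrite inE in Hna.
  rewrite inE /= !inE Hna HuX icl_setI_subtree // icl_setD_subtree // subsetIr !andbT /=.
  apply/subsetP => z; rewrite in_setD => /andP [Hza Hz].
  move: (subsetP HXs z Hz); rewrite in_setU1 big_setU1 //= in_setU.
  case/orP => [/eqP ->|/orP [Hz'|Hz']]; first by rewrite setU11.
    by rewrite Hz' in Hza.
  by rewrite in_setU1 Hz' orbT.
case=> [[X0 Y]] /setXP /= [HX HY] ->.
have Hi := icl_top_setU HA Ha HaA HX HY.
move: HX HY; rewrite !inE => /and3P [HuX HXs _] /andP [HYs _].
rewrite HuX Hi /= andbT big_setU1 //=; apply/subsetP => z /setUP [Hz|Hz].
  by move: (subsetP HXs z Hz); rewrite !in_setU1 in_setU => /orP [->|->]; rewrite ?orbT.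
by rewrite in_setU1 in_setU (subsetP HYs z Hz) orbT.
Qed.

Lemma card_icl_top (A : {set V}) : A \subset children T u ->
  #|icl_top A| = \prod_(c in A) (Isub c).+1.
Proof.
move: {2}#|A| (erefl #|A|) => n; elim: n A => [|n IH] A HA HAs.
  move/eqP: HA; rewrite cards_eq0 => /eqP ->; rewrite big_set0.
  apply/eqP/cards1P; exists [set u]; apply/setP => X; rewrite !inE big_set0 setU0.
  apply/idP/idP; last by move/eqP ->; rewrite set11 subxx icl_set1.
  by case/and3P => HuX Hs _; rewrite eqEsubset Hs sub1set.
have : 0 < #|A| by rewrite HA.
rewrite card_gt0 => /set0Pn [a Ha].
set A' := A :\ a.
have HA' : #|A'| = n by move: HA; rewrite (cardsD1 a) Ha => -[].
have HA's : A' \subset children T u by apply: subset_trans (subsetDl _ _) HAs.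
have Hach : a \in children T u := subsetP HAs a Ha.
have HaA' : a \notin A' by rewrite !inE eqxx.
rewrite (big_setD1 a Ha) /= mulnC -/A' -(IH A' HA' HA's) -card_icl_sets0 -cardsX.
rewrite -(setD1K Ha) -/A' icl_top_split //.
apply: card_in_imset => -[X1 Y1] -[X2 Y2] /setXP [/= H1 H1'] /setXP [/= H2 H2'] /= Heq.
have D1 := icl_top_disj HA's Hach HaA' H1; have D2 := icl_top_disj HA's Hach HaA' H2.
move: H1' H2'; rewrite !inE => /andP [S1 _] /andP [S2 _].
have partI (X Y : {set V}) : [disjoint X & subtree T a] -> Y \subset subtree T a ->
    (X :|: Y) :&: subtree T a = Y.
  by move=> Hd Hs; rewrite setIUl (disjoint_setI0 Hd) set0U; apply/setIidPl.
have partD (X Y : {set V}) : [disjoint X & subtree T a] -> Y \subset subtree T a ->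
    (X :|: Y) :\: subtree T a = X.
  move=> Hd Hs; rewrite setDUl (setDidPl Hd).
  by move: Hs; rewrite -setD_eq0 => /eqP ->; rewrite setU0.
have := partI _ _ D1 S1; have := partD _ _ D1 S1; rewrite Heq.
by rewrite (partI _ _ D2 S2) (partD _ _ D2 S2) => -> ->.
Qed.

(* I(u) = \sum_c I(c) + \prod_c (I(c) + 1): sets avoiding u live below one
   child, and sets containing u are free unions of one possibly empty infima
   closed set per child subtree. *)
Lemma Isub_rec : Isub u =
  \sum_(c in children T u) Isub c + \prod_(c in children T u) (Isub c).+1.
Proof.
have Htop : icl_top (children T u) = [set X in icl_sets u | u \in X].
  apply/setP => X; rewrite !inE -subtree_decomp; apply/idP/idP.
    case/and3P => HuX -> ->; rewrite HuX !andbT; apply/set0Pn; by exists u.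
  by case/andP => /and3P [_ -> ->] ->.
have Hsplit : icl_sets u = icl_top (children T u) :|: \bigcup_(c in children T u) icl_sets c.
  apply/setP => X; rewrite Htop in_setU inE; apply/idP/idP.
    move=> HX; case: (boolP (u \in X)) => HuX; first by rewrite HX.
    have [c Hc HXc] := icl_sets_notin HX HuX.
    by apply/orP; right; apply/bigcupP; exists c.
  case/orP => [/andP [] //|/bigcupP [c Hc]].
  rewrite !inE => /and3P [-> Hs ->]; rewrite andbT /=.
  exact: subset_trans Hs (subtree_child Hc).
rewrite /Isub Hsplit cardsU disjoint_setI0 ?cards0 ?subn0.
  rewrite addnC card_icl_top // card_bigcup_disj //.
  move=> c1 c2 H1 H2 Hne; rewrite disjoint_subset; apply/subsetP => X.
  rewrite !inE => /and3P [/set0Pn [z Hz] Hs1 _]; apply/negP => /and3P [_ Hs2 _].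
  have := subtree_disj H1 H2 (subsetP Hs1 z Hz) (subsetP Hs2 z Hz).
  by move/eqP; rewrite (negbTE Hne).
apply: bigcup_disjoint => c Hc.
rewrite disjoint_sym disjoint_subset; apply/subsetP => X; rewrite !inE => /and3P [_ Hs _].
apply/negP => /and3P [HuX _ _].
by move: (subsetP Hs u HuX); rewrite (negbTE (notin_subtree_child Hc)).
Qed.

Lemma card_subtree : #|subtree T u| = (\sum_(c in children T u) #|subtree T c|).+1.
Proof.
rewrite {1}subtree_decomp cardsU1 card_bigcup_disj.
  suff -> : u \notin \bigcup_(c in children T u) subtree T c by [].
  by apply/bigcupP => -[c Hc Hu]; rewrite (negbTE (notin_subtree_child Hc)) in Hu.
move=> c1 c2 H1 H2 Hne; rewrite disjoint_subset; apply/subsetP => z Hz.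
by rewrite inE; apply/negP => Hz2; move/eqP: Hne; apply; apply: subtree_disj H1 H2 Hz Hz2.
Qed.

End AtVertex.
End InfClosed.

Lemma Isub_local (V : finType) (T1 T2 : rtree V) u :
  (forall z, z \in subtree T1 u -> children T2 z = children T1 z) ->
  Isub T2 u = Isub T1 u.
Proof.
elim/(tree_ind (T := T1)): u => u IH H.
rewrite (Isub_rec T2) (Isub_rec T1) (H u (subtree_self _ _)).
have E c : c \in children T1 u -> Isub T2 c = Isub T1 c.
  move=> Hc; apply: IH => // z Hz; apply: H.
  exact: subsetP (subtree_child Hc) z Hz.
by congr (_ + _); apply: eq_bigr => c Hc; rewrite E.
Qed.

Section Regraft.
Variables (V : finType) (T : rtree V) (M : {set V}) (g : V -> V).
Local Notation r := (troot T).
Local Notation p := (tpar T).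
Hypothesis root_notin : r \notin M.
Hypothesis g_above : forall m m', m \in M -> m' \in M -> ~ anc T m' (g m).

Definition regraft_par z : V := if z \in M then g z else p z.

Lemma regraft_par_root : regraft_par r = r.
Proof. by rewrite /regraft_par (negbTE root_notin) par_root. Qed.

(* Below no vertex of M, the new parent map follows the old one. *)
Lemma regraft_reach_avoid z : (forall m, m \in M -> ~ anc T m z) ->
  exists k, iter k regraft_par z = r.
Proof.
move=> Hz; have [k Hk] := par_reach T z; exists k; rewrite -Hk.
elim: k {Hk} => // k IH; rewrite !iterS IH /regraft_par.
by case: ifP => // Hm; case: (Hz _ Hm); exists k.
Qed.

Lemma regraft_reach z : exists k, iter k regraft_par z = r.
Proof.
have [k Hk] := par_reach T z; elim: k z Hk => [|k IH] z Hk; first by exists 0.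
rewrite iterSr in Hk; case Hz : (z \in M).
  have [m Hm] := regraft_reach_avoid (fun m' => g_above Hz (m' := m')).
  by exists m.+1; rewrite iterSr /regraft_par Hz.
by have [m Hm] := IH _ Hk; exists m.+1; rewrite iterSr /regraft_par Hz.
Qed.

Definition regraft : rtree V := RTree regraft_par_root regraft_reach.

Lemma children_regraft z c : (c \in children regraft z) =
  (c != r) && (if c \in M then g c == z else p c == z).
Proof. by rewrite inE /= /regraft_par; case: (c \in M). Qed.

Lemma children_regraft_in z c : c \in M -> (c \in children regraft z) = (g c == z).
Proof.
move=> Hc; rewrite children_regraft Hc; have -> // : c != r.
by apply/eqP => E; move: root_notin; rewrite -E Hc.
Qed.

Lemma children_regraft_out z c : c \notin M ->
  (c \in children regraft z) = (c \in children T z).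
Proof. by move=> Hc; rewrite children_regraft (negbTE Hc) inE. Qed.

Lemma children_regraft_same z : (forall m, m \in M -> g m != z /\ p m != z) ->
  children regraft z = children T z.
Proof.
move=> H; apply/setP => c; rewrite children_regraft inE.
case: (boolP (c \in M)) => // Hc.
by have [/negbTE -> /negbTE ->] := H c Hc.
Qed.

Lemma Isub_regraft_same u :
  (forall m, m \in M -> g m \notin subtree T u /\ p m \notin subtree T u) ->
  Isub regraft u = Isub T u.
Proof.
move=> H; apply: Isub_local => z Hz; apply: children_regraft_same => m Hm.
by have [H1 H2] := H m Hm; split; apply/eqP => E; [move: H1 | move: H2]; rewrite E Hz.
Qed.

End Regraft.

Lemma sum_lt_prod (I : finType) (A : {set I}) (F : I -> nat) :
  \sum_(i in A) F i < \prod_(i in A) (F i).+1.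
Proof.
apply: (big_rec2 (fun y1 y2 => y1 < y2)) => // i y1 y2 _ H.
have : 0 < y2 by apply: leq_ltn_trans H.
move=> Hy2; nia.
Qed.

Lemma factor_le_prod (I : finType) (A : {set I}) (F : I -> nat) c :
  c \in A -> (F c).+1 <= \prod_(i in A) (F i).+1.
Proof. by move=> Hc; rewrite (bigD1 c) //=; apply: leq_pmulr; apply: prodn_gt0. Qed.

Lemma rec_strict_mono (I : finType) (A : {set I}) c0 (F1 F2 : I -> nat) :
  c0 \in A -> F1 c0 < F2 c0 -> (forall c, c \in A -> c != c0 -> F1 c = F2 c) ->
  \sum_(c in A) F1 c + \prod_(c in A) (F1 c).+1 <
  \sum_(c in A) F2 c + \prod_(c in A) (F2 c).+1.
Proof.
move=> Hc0 Hlt Heq; rewrite !(big_setD1 c0 Hc0) /=.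
have E1 : \sum_(c in A :\ c0) F1 c = \sum_(c in A :\ c0) F2 c.
  by apply: eq_bigr => c; rewrite !inE => /andP [H1 H2]; apply: Heq.
have E2 : \prod_(c in A :\ c0) (F1 c).+1 = \prod_(c in A :\ c0) (F2 c).+1.
  by apply: eq_bigr => c; rewrite !inE => /andP [H1 H2]; rewrite Heq.
rewrite E1 E2; have : 0 < \prod_(c in A :\ c0) (F2 c).+1 by apply: prodn_gt0.
nia.
Qed.

Lemma three_mul_lt_pow2 t : 3 <= t -> 3 * t + 2 < 2 * 2 ^ t.
Proof.
move=> Ht; have [k ->] : exists k, t = k + 3 by exists (t - 3); lia.
by elim: k => [|k IH] //; rewrite addSn expnS; lia.
Qed.

(* The arithmetic behind swap_improvable: with x = I(X) >= 3, the root
   recursion before and after the swap. *)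
Lemma swap_arith x s q : 3 <= x -> s < q ->
  x + (1 + (1 + s) + 2 * (2 * q)) + x.+1 * (1 + (1 + s) + 2 * (2 * q)).+1 <
  (x + s + x.+1 * q) + 2 + (x + s + x.+1 * q).+1 * 4.
Proof. by move=> /subnK <- /subnK <-; nia. Qed.

Section IsubFacts.
Variables (V : finType) (T : rtree V).

Lemma Isub_gt0 u : 0 < Isub T u.
Proof. by rewrite Isub_rec; apply: ltn_addl; apply: prodn_gt0. Qed.

Lemma Isub_leaf u : children T u = set0 -> Isub T u = 1.
Proof. by move=> H; rewrite Isub_rec H !big_set0. Qed.

Lemma Isub_nonleaf u : children T u != set0 -> 3 <= Isub T u.
Proof.
case/set0Pn => c Hc; rewrite Isub_rec.
have H1 : Isub T c <= \sum_(i in children T u) Isub T i by rewrite (bigD1 c) //= leq_addr.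
have H2 := factor_le_prod (Isub T) Hc.
have := Isub_gt0 c; lia.
Qed.

Lemma Isub_leaves u : (forall e, e \in children T u -> children T e = set0) ->
  Isub T u = #|children T u| + 2 ^ #|children T u|.
Proof.
move=> H; have E e : e \in children T u -> Isub T e = 1 by move/H/Isub_leaf.
rewrite Isub_rec (eq_bigr _ E) (eq_bigr (fun _ => 2) (fun e He => congr1 succn (E e He))).
by rewrite sum_nat_const prod_nat_const muln1.
Qed.

Lemma card_subtree_leaf u : children T u = set0 -> #|subtree T u| = 1.
Proof. by move=> H; rewrite card_subtree H big_set0. Qed.

Lemma card_subtree_leaves u : (forall e, e \in children T u -> children T e = set0) ->
  #|subtree T u| = #|children T u|.+1.
Proof.
move=> H; rewrite card_subtree (eq_bigr (fun _ => 1)) ?sum_nat_const ?muln1 //.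
by move=> e He; apply: card_subtree_leaf; apply: H.
Qed.

Lemma card_V_root : #|V| = (\sum_(c in children T (troot T)) #|subtree T c|).+1.
Proof. by rewrite -card_subtree subtree_root cardsT. Qed.

End IsubFacts.

Definition improvable (V : finType) (T : rtree V) : Prop :=
  exists T' : rtree V, Isub T' (troot T') < Isub T (troot T).

Lemma minimal_not_improvable (V : finType) (T : rtree V) :
  minimal T -> ~ improvable T.
Proof. by move=> Hmin [T' HT']; have := Hmin V T' (erefl _); rewrite !Icount_root; lia. Qed.

(* Lifting a grandchild: the child x of v (itself a child of w) is moved to
   w.  If this lowers I(w), it lowers I at every ancestor of w, hence at the
   root. *)
Section LiftGrandchild.
Variables (V : finType) (T : rtree V) (x v w : V).
Hypothesis x_child : x \in children T v.
Hypothesis v_child : v \in children T w.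

Lemma lift_not_anc : ~ anc T x w.
Proof.
move=> Hxw; have Exw := anc_antisym Hxw (anc_trans (child_anc v_child) (child_anc x_child)).
apply: (child_neq x_child); apply: anc_antisym _ (child_anc x_child).
by rewrite Exw; apply: child_anc v_child.
Qed.

Lemma lift_root_notin : troot T \notin [set x].
Proof. by rewrite inE eq_sym; apply: child_neq_root x_child. Qed.

Lemma lift_above m m' : m \in [set x] -> m' \in [set x] -> ~ anc T m' w.
Proof. by rewrite !inE => _ /eqP ->; apply: lift_not_anc. Qed.

Definition lift_tree : rtree V := regraft lift_root_notin lift_above.
Local Notation T' := lift_tree.

Lemma lift_same u : w \notin subtree T u -> v \notin subtree T u -> Isub T' u = Isub T u.
Proof. by move=> Hw Hv; apply: Isub_regraft_same => m; rewrite inE => /eqP ->; rewrite (child_par x_child). Qed.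

(* The effect on I(w), in terms of the other children of v and w. *)
Lemma lift_lt_at_w :
  \prod_(c in children T w :\ v) (Isub T c).+1 * \sum_(c in children T v :\ x) Isub T c
    < \prod_(c in children T v :\ x) (Isub T c).+1 ->
  Isub T' w < Isub T w.
Proof.
set P := \prod_(c in children T w :\ v) _; set s := \sum_(c in children T v :\ x) _.
set q := \prod_(c in children T v :\ x) _.
pose S := \sum_(c in children T w :\ v) Isub T c.
move=> Hlt.
have vw : v != w by apply/eqP; apply: child_neq v_child.
have x_notin_w : x \notin children T w.
  by apply/negP => /child_par; rewrite (child_par x_child); apply/eqP.
have chw : children T' w = x |: children T w.
  apply/setP => c; rewrite children_regraft !inE.
  by case: (eqVneq c x) => [->|//]; rewrite eqxx andbT; apply: child_neq_root x_child.
have chv : children T' v = children T v :\ x.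
  apply/setP => c; rewrite children_regraft !inE.
  by case: (eqVneq c x) => [->|//]; rewrite [w == v]eq_sym (negbTE vw) andbF.
have Ix : Isub T' x = Isub T x.
  apply: lift_same; first by apply/subtreeP; apply: lift_not_anc.
  exact: anc_notin_subtree_child x_child (anc_refl _ _).
have Iv c : c \in children T v :\ x -> Isub T' c = Isub T c.
  rewrite in_setD1 => /andP [_ Hc]; apply: lift_same.
    exact: anc_notin_subtree_child Hc (child_anc v_child).
  exact: anc_notin_subtree_child Hc (anc_refl _ _).
have Iw c : c \in children T w :\ v -> Isub T' c = Isub T c.
  rewrite in_setD1 => /andP [Hcv Hc]; apply: lift_same.
    exact: anc_notin_subtree_child Hc (anc_refl _ _).
  exact: sibling_notin_subtree Hc v_child _.
have EIv : Isub T v = Isub T x + s + (Isub T x).+1 * q.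
  by rewrite (Isub_rec T v) !(big_setD1 x x_child) /= addnA.
have EI'v : Isub T' v = s + q.
  rewrite (Isub_rec T' v) chv (eq_bigr _ Iv).
  by rewrite (eq_bigr _ (fun c Hc => congr1 succn (Iv c Hc))).
have EIw : Isub T w = Isub T v + S + (Isub T v).+1 * P.
  by rewrite (Isub_rec T w) !(big_setD1 v v_child) /= addnA.
have EI'w : Isub T' w = Isub T x + (Isub T' v + S) + (Isub T x).+1 * ((Isub T' v).+1 * P).
  rewrite (Isub_rec T' w) chw !(big_setU1 _ x_notin_w) /= Ix.
  rewrite !(big_setD1 v v_child) /= (eq_bigr _ Iw).
  by rewrite (eq_bigr _ (fun c Hc => congr1 succn (Iw c Hc))).
rewrite EI'w EI'v EIw EIv.
have := Isub_gt0 T x; have : 0 < P by apply: prodn_gt0.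
nia.
Qed.

(* A decrease at w propagates along the path to the root: the ancestors of w
   keep their children, and only the child towards w changes its value. *)
Lemma lift_lt_anc : Isub T' w < Isub T w -> forall u, anc T u w -> Isub T' u < Isub T u.
Proof.
move=> Hw; elim/(tree_ind (T := T)) => u IH Hu.
case: (eqVneq u w) => [-> //|Hne].
have [c0 Hc0 Hc0w] := descend_child Hu (fun E => elimN eqP Hne (esym E)).
have Huv : u != v.
  by apply/eqP => E; subst u; apply: (child_neq v_child); apply: anc_antisym Hu (child_anc v_child).
have Hchu : children T' u = children T u.
  apply: children_regraft_same => m; rewrite inE => /eqP ->.
  by rewrite (child_par x_child) eq_sym Hne eq_sym Huv.
rewrite (Isub_rec T' u) (Isub_rec T u) Hchu.
apply: (rec_strict_mono Hc0 (IH c0 Hc0 Hc0w)) => c Hc Hcc0.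
have not_to_w : ~ anc T c w.
  by move=> Hcw; move/eqP: Hcc0; apply; apply: children_disj Hc Hc0 Hcw Hc0w.
apply: lift_same; first exact/subtreeP.
apply/subtreeP => Hcv; case: (anc_step Hcv) => [Ecv|]; last by rewrite (child_par v_child).
by subst c; move/eqP: Hne; apply; rewrite -(child_par Hc) (child_par v_child).
Qed.

Lemma lift_improvable :
  \prod_(c in children T w :\ v) (Isub T c).+1 * \sum_(c in children T v :\ x) Isub T c
    < \prod_(c in children T v :\ x) (Isub T c).+1 -> improvable T.
Proof. by move=> H; exists T'; apply: lift_lt_anc (lift_lt_at_w H) _ (anc_root _ _). Qed.

End LiftGrandchild.

(* Grafting a child of the root below a sibling: cj is moved under ci. *)
Section GraftSibling.
Variables (V : finType) (T : rtree V) (ci cj : V).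
Local Notation r := (troot T).
Hypothesis ci_child : ci \in children T r.
Hypothesis cj_child : cj \in children T r.
Hypothesis ci_cj : ci != cj.

Lemma graft_root_notin : r \notin [set cj].
Proof. by rewrite inE eq_sym; apply: child_neq_root cj_child. Qed.

Lemma graft_above m m' : m \in [set cj] -> m' \in [set cj] -> ~ anc T m' ci.
Proof. by rewrite !inE => _ /eqP ->; apply: sibling_not_anc cj_child ci_child _; rewrite eq_sym. Qed.

Definition graft_tree : rtree V := regraft graft_root_notin graft_above.
Local Notation T' := graft_tree.

Lemma graft_same u : ci \notin subtree T u -> r \notin subtree T u -> Isub T' u = Isub T u.
Proof. by move=> H1 H2; apply: Isub_regraft_same => m; rewrite inE => /eqP ->; rewrite (child_par cj_child). Qed.

Lemma graft_improvable :
  \prod_(c in children T ci) (Isub T c).+1 <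
    \prod_(c in (children T r :\ cj) :\ ci) (Isub T c).+1 * \sum_(c in children T ci) Isub T c ->
  improvable T.
Proof.
set Q := \prod_(c in (children T r :\ cj) :\ ci) _; set s := \sum_(c in children T ci) _.
set q := \prod_(c in children T ci) _; pose S := \sum_(c in (children T r :\ cj) :\ ci) Isub T c.
move=> Hlt; exists T'.
have ci_r : ci != r by apply: child_neq_root ci_child.
have chci : children T' ci = cj |: children T ci.
  apply/setP => c; rewrite children_regraft !inE.
  by case: (eqVneq c cj) => [->|//]; rewrite eqxx andbT; apply: child_neq_root cj_child.
have chr : children T' r = children T r :\ cj.
  apply/setP => c; rewrite children_regraft !inE.
  by case: (eqVneq c cj) => [->|//]; rewrite (negbTE ci_r) andbF.
have cj_notin : cj \notin children T ci.
  by apply/negP => /child_par; rewrite (child_par cj_child); apply/eqP; rewrite eq_sym.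
have Icj : Isub T' cj = Isub T cj.
  apply: graft_same; first by apply: sibling_notin_subtree cj_child ci_child _; rewrite eq_sym.
  exact: anc_notin_subtree_child cj_child (anc_refl _ _).
have Ici c : c \in children T ci -> Isub T' c = Isub T c.
  move=> Hc; apply: graft_same; first exact: anc_notin_subtree_child Hc (anc_refl _ _).
  exact: anc_notin_subtree_child Hc (anc_root _ _).
have Ir c : c \in (children T r :\ cj) :\ ci -> Isub T' c = Isub T c.
  rewrite !in_setD1 => /and3P [Hci _ Hc]; apply: graft_same.
    exact: sibling_notin_subtree Hc ci_child _.
  exact: anc_notin_subtree_child Hc (anc_refl _ _).
have ci_in : ci \in children T r :\ cj by rewrite in_setD1 ci_cj ci_child.
have EIci : Isub T ci = s + q by rewrite Isub_rec.
have EI'ci : Isub T' ci = Isub T cj + s + (Isub T cj).+1 * q.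
  rewrite (Isub_rec T' ci) chci !(big_setU1 _ cj_notin) /= Icj (eq_bigr _ Ici).
  by rewrite (eq_bigr _ (fun c Hc => congr1 succn (Ici c Hc))) addnA.
have EIr : Isub T r = Isub T cj + (Isub T ci + S) + (Isub T cj).+1 * ((Isub T ci).+1 * Q).
  by rewrite (Isub_rec T r) !(big_setD1 cj cj_child) /= !(big_setD1 ci ci_in) /=.
have EI'r : Isub T' r = Isub T' ci + S + (Isub T' ci).+1 * Q.
  rewrite (Isub_rec T' r) chr !(big_setD1 ci ci_in) /= (eq_bigr _ Ir).
  by rewrite (eq_bigr _ (fun c Hc => congr1 succn (Ir c Hc))) addnA.
rewrite /= EI'r EIr EI'ci EIci.
have := Isub_gt0 T cj; nia.
Qed.

End GraftSibling.

(* Gathering leaves: of three leaf children l1, l2, l3 of the root, l2 and l3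
   are moved under l1.  The three factors 2 * 2 * 2 of the root's product
   become a single factor 7 = I(l1) + 1, which pays off as soon as the
   remaining children contribute a product of at least 4. *)
Section GatherLeaves.
Variables (V : finType) (T : rtree V) (l1 l2 l3 : V).
Local Notation r := (troot T).
Hypothesis l1_child : l1 \in children T r.
Hypothesis l2_child : l2 \in children T r.
Hypothesis l3_child : l3 \in children T r.
Hypothesis l1_l2 : l1 != l2.
Hypothesis l1_l3 : l1 != l3.
Hypothesis l2_l3 : l2 != l3.
Hypothesis l1_leaf : children T l1 = set0.
Hypothesis l2_leaf : children T l2 = set0.
Hypothesis l3_leaf : children T l3 = set0.

Lemma gather_root_notin : r \notin [set l2; l3].
Proof.
by rewrite !inE !(eq_sym r) (negbTE (child_neq_root l2_child)) (negbTE (child_neq_root l3_child)).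
Qed.

Lemma gather_moved m : m \in [set l2; l3] ->
  [/\ m \in children T r, m != l1 & children T m = set0].
Proof. by case/set2P => ->; split; rewrite // eq_sym. Qed.

Lemma gather_above m m' : m \in [set l2; l3] -> m' \in [set l2; l3] -> ~ anc T m' l1.
Proof. by move=> _ /gather_moved [Hm' Hne _]; apply: sibling_not_anc Hm' l1_child Hne. Qed.

Definition gather_tree : rtree V := regraft gather_root_notin gather_above.
Local Notation T' := gather_tree.

Lemma gather_same u : l1 \notin subtree T u -> r \notin subtree T u -> Isub T' u = Isub T u.
Proof. by move=> H1 H2; apply: Isub_regraft_same => m /gather_moved [/child_par -> _ _]. Qed.

Lemma gather_children : children T' l1 = [set l2; l3] /\
  children T' r = (children T r :\ l2) :\ l3.
Proof.
have l1_r : (l1 == r) = false by apply/negbTE; apply: child_neq_root l1_child.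
split; apply/setP => c; case: (boolP (c \in [set l2; l3])) => Hc.
- by rewrite children_regraft_in //= eqxx.
- by rewrite children_regraft_out // l1_leaf inE.
- by rewrite children_regraft_in //= l1_r; case/set2P: Hc => ->; rewrite !inE eqxx ?andbF.
- rewrite children_regraft_out //; move: Hc; rewrite !inE negb_or => /andP [A B].
  by rewrite A B.
Qed.

Lemma gather_improvable :
  4 <= \prod_(c in ((children T r :\ l1) :\ l2) :\ l3) (Isub T c).+1 -> improvable T.
Proof.
set R := ((children T r :\ l1) :\ l2) :\ l3.
set P := \prod_(c in R) _; pose S := \sum_(c in R) Isub T c.
move=> HP; exists T'.
have [chl1 chr] := gather_children.
have moved_leaf l : l \in [set l2; l3] -> Isub T' l = 1.
  case/gather_moved => Hl Hne Hleaf; rewrite gather_same ?Isub_leaf //.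
    exact: sibling_notin_subtree Hl l1_child Hne.
  exact: anc_notin_subtree_child Hl (anc_refl _ _).
have EI'l1 : Isub T' l1 = 6.
  rewrite (Isub_rec T' l1) chl1 !big_setU1 ?inE //= !big_set1 !moved_leaf //.
    by rewrite !inE eqxx orbT.
  by rewrite !inE eqxx.
have Ir c : c \in R -> Isub T' c = Isub T c.
  rewrite !in_setD1 => /and4P [_ _ Hc1 Hc]; apply: gather_same.
    exact: sibling_notin_subtree Hc l1_child Hc1.
  exact: anc_notin_subtree_child Hc (anc_refl _ _).
have l2_in : l2 \in children T r :\ l1 by rewrite in_setD1 eq_sym l1_l2 l2_child.
have l3_in : l3 \in (children T r :\ l1) :\ l2 by rewrite !in_setD1 eq_sym l2_l3 eq_sym l1_l3 l3_child.
have EIr : Isub T r = 1 + (1 + (1 + S)) + 2 * (2 * (2 * P)).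
  rewrite (Isub_rec T r) !(big_setD1 l1 l1_child) /= !(big_setD1 l2 l2_in) /=.
  by rewrite !(big_setD1 l3 l3_in) /= !Isub_leaf.
have l1_in : l1 \in (children T r :\ l2) :\ l3 by rewrite !in_setD1 l1_l3 l1_l2 l1_child.
have ER : ((children T r :\ l2) :\ l3) :\ l1 = R.
  by apply/setP => c; rewrite !in_setD1; case: (c == l1); case: (c == l2); case: (c == l3).
have EI'r : Isub T' r = 6 + S + 7 * P.
  rewrite (Isub_rec T' r) chr !(big_setD1 l1 l1_in) /= ER EI'l1 (eq_bigr _ Ir).
  by rewrite (eq_bigr _ (fun c Hc => congr1 succn (Ir c Hc))) addnA.
rewrite /= EI'r EIr; lia.
Qed.

End GatherLeaves.

Section ThreeChildren.
Variables (V : finType) (T : rtree V) (c l1 l2 : V).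
Local Notation r := (troot T).
Hypothesis root_children : children T r = [set c; l1; l2].
Hypothesis c_l1 : c != l1.
Hypothesis c_l2 : c != l2.
Hypothesis l1_l2 : l1 != l2.
Hypothesis l1_leaf : children T l1 = set0.
Hypothesis l2_leaf : children T l2 = set0.

Lemma c_child : c \in children T r. Proof. by rewrite root_children !inE eqxx. Qed.
Lemma l1_child : l1 \in children T r. Proof. by rewrite root_children !inE eqxx orbT. Qed.
Lemma l2_child : l2 \in children T r. Proof. by rewrite root_children !inE eqxx !orbT. Qed.

Lemma c_neq_root : c != r. Proof. exact: child_neq_root c_child. Qed.

Lemma grandchild_neq e : e \in children T c -> [/\ e != r, e != l1, e != l2 & e != c].
Proof.
move=> He; have not_root_child l : l \in children T r -> e != l.
  by move=> Hl; apply: contra_neq c_neq_root => E; rewrite -(child_par He) E (child_par Hl).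
split; [exact: child_neq_root He | exact: not_root_child l1_child |
        exact: not_root_child l2_child | exact/eqP/(child_neq He)].
Qed.

Lemma Isub_root_three : Isub T r = Isub T c + 2 + (Isub T c).+1 * 4.
Proof.
have c_notin : c \notin [set l1; l2] by rewrite !inE negb_or c_l1 c_l2.
have l1_notin : l1 \notin [set l2] by rewrite inE l1_l2.
rewrite (Isub_rec T r) root_children -setUA !(big_setU1 _ c_notin) /= !(big_setU1 _ l1_notin).
by rewrite /= !big_set1 (Isub_leaf l1_leaf) (Isub_leaf l2_leaf).
Qed.

(* Swapping a deep grandchild: if c has a child X with I(X) >= 3, move X to
   the root and the two leaves below c. *)
Section SwapDeep.
Variable X : V.
Hypothesis X_child : X \in children T c.
Hypothesis X_big : 3 <= Isub T X.

Local Notation M := [set X; l1; l2].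
Local Notation g := (fun m : V => if m == X then r else c).

Lemma swap_moved m : m \in M -> [/\ ~ anc T m r, ~ anc T m c,
  g m \in [set r; c] & tpar T m \in [set r; c]].
Proof.
have [X_r X_l1 X_l2 _] := grandchild_neq X_child.
have [l1_X l2_X] : (l1 == X) = false /\ (l2 == X) = false.
  by rewrite ![_ == X]eq_sym (negbTE X_l1) (negbTE X_l2).
case/setUP => [/set2P [] ->|/set1P ->]; rewrite ?eqxx ?l1_X ?l2_X.
- split; [exact: not_anc_root | exact: child_not_anc X_child | by rewrite set21 |].
  by rewrite (child_par X_child) set22.
- split; [exact/not_anc_root/child_neq_root/l1_child | | by rewrite set22 |].
    by apply: sibling_not_anc l1_child c_child _; rewrite eq_sym.
  by rewrite (child_par l1_child) set21.
- split; [exact/not_anc_root/child_neq_root/l2_child | | by rewrite set22 |].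
    by apply: sibling_not_anc l2_child c_child _; rewrite eq_sym.
  by rewrite (child_par l2_child) set21.
Qed.

Lemma swap_root_notin : r \notin M.
Proof. by apply/negP => /swap_moved [H _ _ _]; apply: H; apply: anc_refl. Qed.

Lemma swap_above m m' : m \in M -> m' \in M -> ~ anc T m' (g m).
Proof. by move=> _ /swap_moved [H1 H2 _ _]; case: (m == X). Qed.

Definition swap_tree : rtree V := regraft swap_root_notin swap_above.
Local Notation T' := swap_tree.

Lemma swap_same u : r \notin subtree T u -> c \notin subtree T u -> Isub T' u = Isub T u.
Proof.
move=> Hr Hc; apply: Isub_regraft_same => m /swap_moved [_ _ Hg Hp].
by split; [move: Hg | move: Hp]; case/set2P => ->.
Qed.

Lemma swap_distinct : [/\ (l1 == X) = false, (l2 == X) = false,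
  (c == r) = false, (l1 == c) = false & (l2 == c) = false].
Proof.
have [_ X_l1 X_l2 _] := grandchild_neq X_child.
by rewrite ![_ == X]eq_sym ![_ == c]eq_sym (negbTE X_l1) (negbTE X_l2)
  (negbTE c_neq_root) (negbTE c_l1) (negbTE c_l2).
Qed.

Lemma swap_fresh e : e \notin M -> [&& e != X, e != l1 & e != l2].
Proof. by rewrite !inE !negb_or => /andP [/andP [-> ->] ->]. Qed.

Lemma swap_children_root : children T' r = [set X; c].
Proof.
have [l1_X l2_X cr l1_c l2_c] := swap_distinct.
apply/setP => e; case: (boolP (e \in M)) => He.
  rewrite children_regraft_in //= !inE.
  by case/setUP: He => [/set2P [] ->|/set1P ->]; rewrite ?eqxx ?l1_X ?l2_X ?cr ?l1_c ?l2_c.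
have /and3P [eX e1 e2] := swap_fresh He.
by rewrite children_regraft_out // root_children !inE (negbTE eX) (negbTE e1) (negbTE e2) !orbF.
Qed.

Lemma swap_children_c : children T' c = l1 |: (l2 |: (children T c :\ X)).
Proof.
have [_ X_l1 X_l2 _] := grandchild_neq X_child.
have [l1_X l2_X cr _ _] := swap_distinct.
apply/setP => e; case: (boolP (e \in M)) => He.
  rewrite children_regraft_in //= !inE.
  case/setUP: He => [/set2P [] ->|/set1P ->]; rewrite ?eqxx ?l1_X ?l2_X //= ?eqxx ?orbT //.
  by rewrite eq_sym cr (negbTE X_l1) (negbTE X_l2).
have /and3P [eX e1 e2] := swap_fresh He.
by rewrite children_regraft_out // !inE (negbTE eX) (negbTE e1) (negbTE e2).
Qed.

Lemma swap_improvable : improvable T.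
Proof.
exists T'; have [X_r X_l1 X_l2 X_c] := grandchild_neq X_child.
set s := \sum_(d in children T c :\ X) Isub T d.
set q := \prod_(d in children T c :\ X) (Isub T d).+1.
have IX : Isub T' X = Isub T X.
  apply: swap_same; first exact: anc_notin_subtree_child X_child (anc_root _ _).
  exact: anc_notin_subtree_child X_child (anc_refl _ _).
have Id d : d \in children T c :\ X -> Isub T' d = Isub T d.
  rewrite in_setD1 => /andP [_ Hd]; apply: swap_same.
    exact: anc_notin_subtree_child Hd (anc_root _ _).
  exact: anc_notin_subtree_child Hd (anc_refl _ _).
have Il l : l \in [set l1; l2] -> Isub T' l = 1.
  have leaf_same l' : l' \in children T r -> l' != c -> children T l' = set0 ->
      Isub T' l' = 1.
    move=> Hl Hne Hleaf; rewrite swap_same ?Isub_leaf //.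
      exact: anc_notin_subtree_child Hl (anc_refl _ _).
    exact: sibling_notin_subtree Hl c_child Hne.
  by case/set2P => ->; apply: leaf_same; rewrite ?l1_child ?l2_child // eq_sym.
have l1_notin : l1 \notin l2 |: (children T c :\ X).
  rewrite in_setU1 in_setD1 (negbTE l1_l2) /=.
  by apply/negP => /andP [_ /grandchild_neq [_ /eqP]].
have l2_notin : l2 \notin children T c :\ X.
  by rewrite in_setD1; apply/negP => /andP [_ /grandchild_neq [_ _ /eqP]].
have EI'c : Isub T' c = 1 + (1 + s) + 2 * (2 * q).
  rewrite (Isub_rec T' c) swap_children_c !(big_setU1 _ l1_notin) /=.
  rewrite !(big_setU1 _ l2_notin) /= !Il ?set21 ?set22 // (eq_bigr _ Id).
  by rewrite (eq_bigr _ (fun d Hd => congr1 succn (Id d Hd))).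
have X_notin : X \notin [set c] by rewrite inE.
have EI'r : Isub T' r = Isub T X + Isub T' c + (Isub T X).+1 * (Isub T' c).+1.
  by rewrite (Isub_rec T' r) swap_children_root !(big_setU1 _ X_notin) /= !big_set1 IX.
have EIc : Isub T c = Isub T X + s + (Isub T X).+1 * q.
  by rewrite (Isub_rec T c) !(big_setD1 X X_child) /= addnA.
rewrite /= EI'r EI'c Isub_root_three EIc.
exact: swap_arith X_big (sum_lt_prod _ _).
Qed.

End SwapDeep.

(* Splitting a broom: if c has t + 1 >= 4 children, all leaves, move one of
   them, d, together with l2 under l1.  Then I(c) = t + 1 + 2 ^ (t + 1)
   drops to t + 2 ^ t, which outweighs the new factor I(l1) + 1 = 7. *)
Section SplitBroom.
Variable d : V.
Hypothesis d_child : d \in children T c.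
Hypothesis c_broom : forall e, e \in children T c -> children T e = set0.
Hypothesis c_wide : 4 <= #|children T c|.

Local Notation M := [set l2; d].

Lemma split_moved m : m \in M -> [/\ m != r, m != c, tpar T m \in [set r; c] & ~ anc T m l1].
Proof.
have [d_r d_l1 _ d_c] := grandchild_neq d_child.
case/set2P => ->.
  split; [exact: child_neq_root l2_child | by rewrite eq_sym | |].
    by rewrite (child_par l2_child) set21.
  by apply: sibling_not_anc l2_child l1_child _; rewrite eq_sym.
split=> //; first by rewrite (child_par d_child) set22.
move=> Hdl; have := children_disj c_child l1_child (anc_trans (child_anc d_child) Hdl) (anc_refl _ _).
by move/eqP; rewrite (negbTE c_l1).
Qed.

Lemma split_root_notin : r \notin M.
Proof. by apply/negP => /split_moved [/eqP]. Qed.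

Lemma split_above m m' : m \in M -> m' \in M -> ~ anc T m' l1.
Proof. by move=> _ /split_moved []. Qed.

Definition split_tree : rtree V := regraft split_root_notin split_above.
Local Notation T' := split_tree.

Lemma split_leaf e : children T e = set0 -> e != l1 -> e != r -> e != c -> Isub T' e = 1.
Proof.
move=> He e_l1 e_r e_c; apply: Isub_leaf; rewrite -He.
apply: children_regraft_same => m /split_moved [_ _ Hp _]; split; first by rewrite eq_sym.
by case/set2P: Hp => ->; rewrite eq_sym.
Qed.

Lemma split_children : [/\ children T' r = [set c; l1],
  children T' l1 = [set l2; d] & children T' c = children T c :\ d].
Proof.
have [d_r d_l1 d_l2 d_c] := grandchild_neq d_child.
have [l1_r l1_c] : (l1 == r) = false /\ (l1 == c) = false.
  by rewrite (negbTE (child_neq_root l1_child)) eq_sym (negbTE c_l1).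
have fresh e : e \notin M -> (e != l2) && (e != d) by rewrite !inE negb_or.
split; apply/setP => e; case: (boolP (e \in M)) => He.
- rewrite children_regraft_in //= l1_r !inE.
  case/set2P: He => ->; rewrite ?(negbTE d_c) ?(negbTE d_l1) //.
  by rewrite ![l2 == _]eq_sym (negbTE c_l2) (negbTE l1_l2).
- have /andP [e2 ed] := fresh e He.
  by rewrite children_regraft_out // root_children !inE (negbTE e2) orbF.
- by rewrite children_regraft_in //= eqxx.
- by rewrite children_regraft_out // l1_leaf inE.
- rewrite children_regraft_in //= l1_c in_setD1; case/set2P: He => ->; last by rewrite eqxx.
  apply/esym/negbTE/andP => -[_ /child_par]; rewrite (child_par l2_child).
  by apply/eqP; rewrite eq_sym c_neq_root.
- have /andP [e2 ed] := fresh e He.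
  by rewrite children_regraft_out // in_setD1 ed.
Qed.

Lemma split_improvable : improvable T.
Proof.
exists T'; have [chr chl1 chc] := split_children.
have [d_r d_l1 d_l2 d_c] := grandchild_neq d_child.
set t := #|children T c :\ d|.
have Ht : #|children T c| = t.+1 by rewrite (cardsD1 d) d_child.
have EI'l1 : Isub T' l1 = 6.
  have l2_notin : l2 \notin [set d] by rewrite inE eq_sym.
  rewrite (Isub_rec T' l1) chl1 !(big_setU1 _ l2_notin) /= !big_set1.
  rewrite (split_leaf l2_leaf) ?(child_neq_root l2_child) 1?eq_sym //.
  by rewrite (split_leaf (c_broom d_child)).
have Ic e : e \in children T c :\ d -> Isub T' e = 1.
  rewrite in_setD1 => /andP [_ He]; have [e_r e_l1 _ e_c] := grandchild_neq He.
  exact: split_leaf (c_broom He) e_l1 e_r e_c.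
have EI'c : Isub T' c = t + 2 ^ t.
  rewrite (Isub_rec T' c) chc (eq_bigr _ Ic).
  rewrite (eq_bigr (fun _ => 2) (fun e He => congr1 succn (Ic e He))).
  by rewrite sum_nat_const prod_nat_const muln1.
have EI'r : Isub T' r = Isub T' c + 6 + (Isub T' c).+1 * 7.
  have c_notin : c \notin [set l1] by rewrite inE.
  by rewrite (Isub_rec T' r) chr !(big_setU1 _ c_notin) /= !big_set1 EI'l1.
rewrite /= EI'r Isub_root_three EI'c (Isub_leaves c_broom) Ht expnS.
have := three_mul_lt_pow2 (_ : 3 <= t); lia.
Qed.

End SplitBroom.
End ThreeChildren.
Section Improvable.
Variables (V : finType) (T : rtree V).
Local Notation r := (troot T).

Lemma single_child_improvable v : v != r -> #|children T v| = 1 -> improvable T.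
Proof.
move=> Hv /eqP /cards1P [x Hx].
have x_child : x \in children T v by rewrite Hx set11.
have v_child : v \in children T (tpar T v) by apply/childP.
apply: (lift_improvable x_child v_child).
by rewrite Hx setDv !big_set0 muln0.
Qed.

Lemma root_single_child_improvable : #|children T r| = 1 -> 3 <= #|V| -> improvable T.
Proof.
move=> /eqP /cards1P [c Hc] H3.
have c_child : c \in children T r by rewrite Hc set11.
have [x x_child] : exists x, x \in children T c.
  apply/set0Pn/negP => /eqP Hleaf; move: H3.
  by rewrite (card_V_root T) Hc big_set1 card_subtree_leaf.
apply: (lift_improvable x_child c_child).
by rewrite Hc setDv big_set0 mul1n; apply: sum_lt_prod.
Qed.

Section ManyChildren.
Variable c1 : V.
Hypothesis c1_child : c1 \in children T r.
Hypothesis c1_max : forall c, c \in children T r -> Isub T c <= Isub T c1.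

Lemma nonleaf_sibling_improvable i j : i \in children T r :\ c1 ->
  j \in (children T r :\ c1) :\ i -> children T i != set0 -> improvable T.
Proof.
rewrite !in_setD1 => /andP [i_c1 i_child] /and3P [j_i j_c1 j_child] i_nonleaf.
apply: (graft_improvable i_child j_child); first by rewrite eq_sym.
have c1_in : c1 \in (children T r :\ j) :\ i by rewrite !in_setD1 eq_sym i_c1 eq_sym j_c1.
have HQ := factor_le_prod (Isub T) c1_in.
have Hs : 0 < \sum_(c in children T i) Isub T c.
  case/set0Pn: i_nonleaf => e He; rewrite (bigD1 e) //=.
  exact: leq_trans (Isub_gt0 T e) (leq_addr _ _).
have := c1_max i_child; rewrite (Isub_rec T i) => Hi.
apply: leq_trans (leq_pmulr _ Hs); apply: leq_trans HQ; rewrite ltnS.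
exact: leq_trans (leq_addl _ _) Hi.
Qed.

(* The remaining children contribute a factor >= 4: either I(c1) >= 3, or
   all children are leaves and there are at least n - 1 >= 7 of them. *)
Lemma leaf_siblings_improvable : 4 <= #|children T r| -> 8 <= #|V| ->
  (forall i, i \in children T r :\ c1 -> children T i = set0) -> improvable T.
Proof.
move=> H4 H8 leaves.
have HA1 := card_setD1 c1_child.
have [l1 Hl1] : exists l1, l1 \in children T r :\ c1.
  by apply/set0Pn; rewrite -card_gt0 HA1; lia.
have [l2 Hl2] : exists l2, l2 \in (children T r :\ c1) :\ l1.
  by apply/set0Pn; rewrite -card_gt0 (card_setD1 Hl1) HA1; lia.
have [l3 Hl3] : exists l3, l3 \in ((children T r :\ c1) :\ l1) :\ l2.
  by apply/set0Pn; rewrite -card_gt0 (card_setD1 Hl2) (card_setD1 Hl1) HA1; lia.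
have L1 := leaves _ Hl1.
have L2 : children T l2 = set0 by apply: leaves; move: Hl2; rewrite in_setD1 => /andP [].
have L3 : children T l3 = set0.
  by apply: leaves; move: Hl3; rewrite !in_setD1 => /and4P [_ _ -> ->].
move: Hl1 Hl2 Hl3; rewrite !in_setD1.
move=> /andP [N1c H1] /and3P [N21 N2c H2] /and4P [N32 N31 N3c H3].
apply: (gather_improvable H1 H2 H3 _ _ _ L1 L2 L3); rewrite 1?eq_sym //.
set R := ((children T r :\ l1) :\ l2) :\ l3.
have c1_R : c1 \in R by rewrite !in_setD1 !(eq_sym c1) N1c N2c N3c c1_child.
have [Hbig|Hsmall] := leqP 3 (Isub T c1).
  by apply: leq_trans (factor_le_prod (Isub T) c1_R); rewrite ltnS.
have all_leaves e : e \in children T r -> children T e = set0.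
  move=> He; case: (eqVneq e c1) => [->|Hne]; last by apply: leaves; rewrite in_setD1 Hne.
  by apply/eqP; apply: contraTT Hsmall => /Isub_nonleaf; rewrite -leqNgt.
have Hn : #|V| = #|children T r|.+1.
  by rewrite -card_subtree_leaves // subtree_root cardsT.
have HR : #|R| = #|children T r| - 3.
  have l2_in : l2 \in children T r :\ l1 by rewrite in_setD1 N21 H2.
  have l3_in : l3 \in (children T r :\ l1) :\ l2 by rewrite !in_setD1 N32 N31 H3.
  by rewrite /R (card_setD1 l3_in) (card_setD1 l2_in) (card_setD1 H1); lia.
rewrite (eq_bigr (fun _ => 2)); last first.
  by move=> e; rewrite !in_setD1 => /and4P [_ _ _ He]; rewrite Isub_leaf // all_leaves.
rewrite prod_nat_const HR; apply: leq_trans (leq_pexp2l (isT : 0 < 2) (_ : 2 <= _)).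
  by [].
by move: H8; rewrite Hn; lia.
Qed.

(* Exactly three children, all but c1 leaves: then |T_c1| >= 5, and either
   c1 has a non-leaf child (swap) or at least four leaf children (split). *)
Lemma three_children_improvable : #|children T r| = 3 -> 8 <= #|V| ->
  (forall i, i \in children T r :\ c1 -> children T i = set0) -> improvable T.
Proof.
move=> H3 H8 leaves.
have /cards2P [l1 [l2 [l1_l2 Hrest]]] : #|children T r :\ c1| == 2.
  by rewrite (card_setD1 c1_child) H3.
have Hl1 : l1 \in children T r :\ c1 by rewrite Hrest !inE eqxx.
have Hl2 : l2 \in children T r :\ c1 by rewrite Hrest !inE eqxx orbT.
have L1 := leaves _ Hl1; have L2 := leaves _ Hl2.
move: (Hl1) (Hl2); rewrite !in_setD1 => /andP [l1_c1 _] /andP [l2_c1 _].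
have Hch : children T r = [set c1; l1; l2] by rewrite -(setD1K c1_child) Hrest setUA.
have c1_l1 : c1 != l1 by rewrite eq_sym.
have c1_l2 : c1 != l2 by rewrite eq_sym.
have Hsub : 5 <= #|subtree T c1|.
  have c1_notin : c1 \notin [set l1; l2] by rewrite !inE negb_or c1_l1 c1_l2.
  have l1_notin : l1 \notin [set l2] by rewrite inE l1_l2.
  move: H8; rewrite (card_V_root T) Hch -setUA !(big_setU1 _ c1_notin) !(big_setU1 _ l1_notin).
  by rewrite /= big_set1 (card_subtree_leaf L1) (card_subtree_leaf L2); lia.
case: (boolP [exists X in children T c1, children T X != set0]).
  case/exists_inP => X HX /Isub_nonleaf HX3.
  exact: (swap_improvable Hch c1_l1 c1_l2 l1_l2 L1 L2 HX HX3).
rewrite negb_exists_in => /forall_inP broom.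
have c1_broom e : e \in children T c1 -> children T e = set0.
  by move=> He; apply/eqP; have := broom e He; rewrite negbK.
have c1_wide : 4 <= #|children T c1| by move: Hsub; rewrite card_subtree_leaves.
have [d Hd] : exists d, d \in children T c1.
  by apply/set0Pn; rewrite -card_gt0; apply: leq_trans c1_wide.
exact: (split_improvable Hch c1_l1 c1_l2 l1_l2 L1 L2 Hd c1_broom c1_wide).
Qed.

End ManyChildren.

Lemma many_children_improvable : 3 <= #|children T r| -> 8 <= #|V| -> improvable T.
Proof.
move=> Hk H8.
have [c0 Hc0] : exists c0, c0 \in children T r.
  by apply/set0Pn; rewrite -card_gt0; apply: leq_trans Hk.
have [c1 c1_child c1_max] := @arg_maxnP _ c0 (fun i => i \in children T r) (Isub T) Hc0.
case: (boolP [exists i in children T r :\ c1, children T i != set0]).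
  case/exists_inP => i Hi i_nonleaf.
  have [j Hj] : exists j, j \in (children T r :\ c1) :\ i.
    by apply/set0Pn; rewrite -card_gt0 (card_setD1 Hi) (card_setD1 c1_child); lia.
  exact: (nonleaf_sibling_improvable c1_child c1_max Hi Hj i_nonleaf).
rewrite negb_exists_in => /forall_inP others.
have leaves i : i \in children T r :\ c1 -> children T i = set0.
  by move=> Hi; apply/eqP; have := others i Hi; rewrite negbK.
have [H3|H4] : #|children T r| = 3 \/ 4 <= #|children T r| by lia.
  exact: three_children_improvable c1_child H3 H8 leaves.
exact: leaf_siblings_improvable c1_child H4 H8 leaves.
Qed.

Lemma root_improvable : 8 <= #|V| -> #|children T r| != 2 -> improvable T.
Proof.
move=> H8 Hk2.
have Hk0 : #|children T r| != 0.
  by apply: contraTneq H8 => /eqP; rewrite cards_eq0 (card_V_root T) => /eqP ->; rewrite big_set0.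
have [H1|H3] : #|children T r| = 1 \/ 3 <= #|children T r| by lia.
  by apply: root_single_child_improvable H1 _; lia.
exact: many_children_improvable H3 H8.
Qed.

End Improvable.

Unset Implicit Arguments.
Set Strict Implicit.

Theorem lemma3p1 (V : finType) (T : rtree V) :
  minimal T ->
  (forall v : V, v != troot T -> #|children T v| != 1) /\
  (8 <= #|V| -> #|children T (troot T)| = 2).
Proof.
move=> /minimal_not_improvable not_impr; split.
  by move=> v Hv; apply/eqP => H1; apply: not_impr; apply: single_child_improvable Hv H1.
by move=> H8; apply/eqP/negPn/negP => Hk2; apply: not_impr; apply: root_improvable H8 Hk2.
Qed.
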